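(* Let $s>0$ and let $Z$ be a random variable that under $\mathbb{Q}$ has mean $0$, variance $1$ and a density $f_Z^{\mathbb{Q}}$ with $f_Z^{\mathbb{Q}}(x)>0$ for all $x\in\mathbb{R}$. Let $S_T=S_0e^{(r+\omega)T+s\sqrt{T}Z}$ where $\omega\in\mathbb{R}$ is such that $e^{-rT}E_{\mathbb{Q}}[S_T]=S_0$. Let $h^*>0$ and let $\mathcal{H}\subset[h^*,\infty)$ with $h^*\in\mathcal{H}$ and $E_{\mathbb{Q}}[S_T^h]<\infty$ for all $h\in\mathcal{H}$. For $h\in\mathcal{H}$ define $\mathbb{P}^h$ by $\frac{d\mathbb{P}^h}{d\mathbb{Q}}=\frac{S_T^h}{E_{\mathbb{Q}}[S_T^h]}$, and let $\mathcal{P}=\{\mathbb{P}^h:h\in\mathcal{H}\}$. Then $F^{\mathbb{P}^{h^*}}_{S_T}\preceq_{\mathbb{F}_{FSD}}F^{\mathbb{P}^h}_{S_T}$ (hence also $\preceq_{\mathbb{F}_{SSD}}$) for all $h\in\mathcal{H}$, $\mathbb{P}^{h^*}$ is a least favorable measure with respect to $\mathbb{F}_{FSD}$, and $\ell^{\mathbb{P}^{h^*}}$ is continuously distributed under $\mathbb{P}^{h^*}$. If moreover $h^*\in(0,1]$, then $\mathbb{P}^{h^*}$ is also a least favorable measure with respect to $\mathbb{F}_{SSD}$.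
   Context: Standing setting: fix $T>0$, $r\in\mathbb{R}$, $S_0>0$, and write $\mathbb{R}_+=[0,\infty)$; $\mathcal{F}=\sigma(S_T)$. For $\mathbb{P}\in\mathcal{P}$, $\ell^{\mathbb{P}}=d\mathbb{P}/d\mathbb{Q}$; $F_X^{\mathbb{P}}$ is the cdf of $X$ under $\mathbb{P}$. For a set $\mathbb{F}$ of measurable functions $\mathbb{R}_+\to\mathbb{R}$ and cdfs $F,G$ on $\mathbb{R}_+$, $F\preceq_{\mathbb{F}}G$ means $\int f\,dF\le\int f\,dG$ for all $f\in\mathbb{F}$ with finite integrals. $\mathbb{F}_{FSD}$ is the set of all non-decreasing functions $\mathbb{R}_+\to\mathbb{R}$; $\mathbb{F}_{SSD}$ is the set of all non-decreasing concave functions $\mathbb{R}_+\to\mathbb{R}$. A measure $\mathbb{P}^*\in\mathcal{P}$ with $\ell^*=d\mathbb{P}^*/d\mathbb{Q}$ is least favorable w.r.t. $\mathbb{F}$ if $F_{\ell^*}^{\mathbb{P}^*}\preceq_{\mathbb{F}}F_{\ell^*}^{\mathbb{P}}$ for all $\mathbb{P}\in\mathcal{P}$. *)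

From HB Require Import structures.
From mathcomp Require Import all_boot all_order all_algebra.
From mathcomp Require Import all_classical all_reals all_analysis.
Set Implicit Arguments. Unset Strict Implicit. Unset Printing Implicit Defensive.
Import Order.TTheory GRing.Theory Num.Theory.
Import numFieldNormedType.Exports.
Local Open Scope classical_set_scope.
Local Open Scope ring_scope.

Section defs.
Context {d : measure_display} {T : measurableType d} {R : realType}.

(* Integral of f : R_+ -> R against the cdf F_X^P of X (X >= 0) under P,
   i.e. \int f dF_X^P = E_P[f(X)]. *)
Definition cdf_integral (P : probability T R) (X : T -> R) (f : R -> R) : \bar R :=
  (\int[P]_w (f (X w))%:E)%E.

Definition cdf_integrable (P : probability T R) (X : T -> R) (f : R -> R) : Prop :=
  P.-integrable [set: T] (fun w => (f (X w))%:E).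

Definition stoch_le (FF : set (R -> R))
    (P : probability T R) (X : T -> R) (P' : probability T R) (Y : T -> R) : Prop :=
  forall f, FF f -> cdf_integrable P X f -> cdf_integrable P' Y f ->
    (cdf_integral P X f <= cdf_integral P' Y f)%E.

Definition cdfR (P : probability T R) (X : T -> R) (x : R) : R :=
  fine (P [set w | X w <= x]).

Definition is_density (Q P : probability T R) (ell : T -> R) : Prop :=
  forall A, measurable A -> P A = (\int[Q]_(w in A) (ell w)%:E)%E.

Definition least_favorable (Q : probability T R) (Pfam : set (probability T R))
    (FF : set (R -> R)) (Pstar : probability T R) (lstar : T -> R) : Prop :=
  [/\ Pfam Pstar, is_density Q Pstar lstar &
      forall P, Pfam P -> stoch_le FF Pstar lstar P lstar].

End defs.

(* functions R_+ -> R (represented as R -> R, only values on [0,oo) matter) *)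
Definition F_FSD {R : realType} : set (R -> R) :=
  [set f | {in `[0, +oo[ &, forall x y : R, x <= y -> f x <= f y}].

Definition F_SSD {R : realType} : set (R -> R) :=
  [set f | F_FSD f /\
    {in `[0, +oo[ &, forall x y : R, forall t : R, 0 <= t <= 1 ->
       t * f x + (1 - t) * f y <= f (t * x + (1 - t) * y)}].

(* For h > hstar, the density of P^h with respect to Q is that of P^hstar
   multiplied by a constant times S_T^(h - hstar), an increasing function of
   S_T.  The two densities therefore cross once, at some level x0 of S_T, so
   that (f(S_T) - f(x0)) (dP^h/dQ - dP^hstar/dQ) >= 0 for every nondecreasing f;
   integrating against Q, where both densities have mass 1, gives first-order
   dominance.  The likelihood S_T^hstar / E_Q[S_T^hstar] is a nondecreasing
   function of S_T, so the dominance passes to it.  It is moreover a strictly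
   increasing function of Z, whose law has a Lebesgue density, so it has no
   atoms under Q, hence none under P^hstar << Q, and its cdf is continuous. *)

From HB Require Import structures.
From mathcomp Require Import all_boot all_order all_algebra.
From mathcomp Require Import all_classical all_reals all_analysis.
From mathcomp Require Import measurable_realfun lra.
Set Implicit Arguments.
Unset Strict Implicit.
Unset Printing Implicit Defensive.
Import Order.TTheory GRing.Theory Num.Theory.
Import numFieldNormedType.Exports.
Local Open Scope classical_set_scope.
Local Open Scope ring_scope.

Section density.
Context d (T : measurableType d) (R : realType).
Variables (mu nu : probability T R) (ell : T -> R).
Hypotheses (mell : measurable_fun [set: T] ell) (ell_ge0 : forall x, 0 <= ell x)
  (nuE : is_density mu nu ell).
Local Open Scope ereal_scope.

Lemma density_integral1 : \int[mu]_x (ell x)%:E = 1.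
Proof. by rewrite -nuE// probability_setT. Qed.

Lemma density_integrable : mu.-integrable [set: T] (EFin \o ell).
Proof.
apply/integrableP; split; first exact/measurable_EFinP.
under eq_integral do rewrite /= ger0_norm//.
by rewrite density_integral1 ltry.
Qed.

Lemma integrableZl_density (c : R) :
  mu.-integrable [set: T] (fun x => (c * ell x)%:E).
Proof.
by under eq_fun do rewrite EFinM; exact: integrableZl density_integrable.
Qed.

Lemma integralZl_density (c : R) : \int[mu]_x (c * ell x)%:E = c%:E.
Proof.
under eq_integral do rewrite EFinM.
by rewrite integralZl ?density_integral1 ?mule1//; exact: density_integrable.
Qed.

Lemma density_measure0 (A : set T) : measurable A -> mu A = 0 -> nu A = 0.
Proof.
move=> mA muA0; rewrite nuE//; apply: null_set_integral => //.
exact/measurable_EFinP/measurable_funTS.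
Qed.

Lemma density_dominates : nu `<< mu.
Proof. by move=> N N0 A mA AN; apply: density_measure0 mA (N0 A mA AN). Qed.

Lemma density_ae_eq_Radon_Nikodym :
  ae_eq mu [set: T] (EFin \o ell) (Radon_Nikodym (charge_of_finite_measure nu) mu).
Proof.
apply: integral_ae_eq => //; first exact: density_integrable.
  exact/measurable_int/Radon_Nikodym_integrable/density_dominates.
move=> A _ mA; rewrite -nuE// -Radon_Nikodym_integral//.
exact: density_dominates.
Qed.

Lemma integral_density (f : T -> \bar R) : nu.-integrable [set: T] f ->
  \int[mu]_x (f x * (ell x)%:E) = \int[nu]_x f x.
Proof.
move=> fi; rewrite -(Radon_Nikodym_change_of_variables density_dominates)//.
apply: ae_eq_integral => //.
- apply: emeasurable_funM; [exact: measurable_int fi|exact/measurable_EFinP].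
- apply: emeasurable_funM; first exact: measurable_int fi.
  apply: measurable_int; apply: Radon_Nikodym_integrable.
  exact: density_dominates.
- exact: ae_eqe_mul2l density_ae_eq_Radon_Nikodym.
Qed.

Lemma integrable_density (f : T -> \bar R) : nu.-integrable [set: T] f ->
  mu.-integrable [set: T] (fun x => f x * (ell x)%:E).
Proof.
move=> fi; apply/integrableP; split.
  apply: emeasurable_funM; [exact: measurable_int fi|exact/measurable_EFinP].
under eq_integral => x _ do rewrite abseM (@gee0_abs _ (ell x)%:E) ?lee_fin//.
have /= -> := integral_density (integrable_abse fi).
by case/integrableP : fi.
Qed.

End density.

Section first_order_dominance.
Context d (T : measurableType d) (R : realType).
Local Open Scope ereal_scope.

Lemma single_crossing_stoch_le (Q P1 P2 : probability T R) (X a b : T -> R)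
    (x0 : R) :
    measurable_fun [set: T] a -> measurable_fun [set: T] b ->
    (forall w, (0 <= a w)%R) -> (forall w, (0 <= b w)%R) ->
    is_density Q P1 a -> is_density Q P2 b ->
    (0 <= x0)%R -> (forall w, (0 <= X w)%R) ->
    (forall w, (X w <= x0 -> b w <= a w)%R) ->
    (forall w, (x0 <= X w -> a w <= b w)%R) ->
  stoch_le F_FSD P1 X P2 X.
Proof.
move=> ma mb a0 b0 P1E P2E x00 X0 below above f Ff i1 i2.
rewrite /cdf_integral -(integral_density ma a0 P1E i1).
rewrite -(integral_density mb b0 P2E i2).
have fXa := integrable_density ma a0 P1E i1.
have fXb := integrable_density mb b0 P2E i2.
set c := f x0.
have ca := integrableZl_density ma a0 P1E c.
have cb := integrableZl_density mb b0 P2E c.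
(* [f \o X - c] and [b - a] have the same sign, and [a], [b] both integrate to 1 *)
have crossing w : (f (X w) * a w + c * b w <= f (X w) * b w + c * a w)%R.
  suff : (0 <= (f (X w) - c) * (b w - a w))%R by lra.
  have Xw0 : X w \in `[0%R, +oo[ by rewrite in_itv /= X0.
  have x0_0 : x0 \in `[0%R, +oo[ by rewrite in_itv /= x00.
  have [Xx0|x0X] := lerP (X w) x0.
  - by apply: mulr_le0; rewrite subr_le0; [exact: Ff|exact: below].
  - by apply: mulr_ge0; rewrite subr_ge0; [exact: Ff (ltW x0X)|exact: above (ltW x0X)].
have : \int[Q]_w ((f (X w))%:E * (a w)%:E + (c * b w)%:E) <=
       \int[Q]_w ((f (X w))%:E * (b w)%:E + (c * a w)%:E).
  by apply: le_integral => // [||w _]; [exact: integrableD..|rewrite -!EFinM -!EFinD lee_fin].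
rewrite integralD// integralD// (integralZl_density mb b0 P2E).
by rewrite (integralZl_density ma a0 P1E) leeD2rE.
Qed.

Lemma stoch_le_subset (FF GG : set (R -> R)) (P1 P2 : probability T R)
    (X Y : T -> R) :
  GG `<=` FF -> stoch_le FF P1 X P2 Y -> stoch_le GG P1 X P2 Y.
Proof. by move=> GF XY f /GF; exact: XY. Qed.

Lemma stoch_le_FSD_comp (P1 P2 : probability T R) (X : T -> R) (phi : R -> R) :
    {in `[0%R, +oo[ &, {homo phi : x y / (x <= y)%R}} ->
    (forall x, (0 <= x)%R -> (0 <= phi x)%R) ->
  stoch_le F_FSD P1 X P2 X -> stoch_le F_FSD P1 (phi \o X) P2 (phi \o X).
Proof.
move=> phi_nd phi0 XY f Ff; apply: (XY (f \o phi)) => x y x0 y0 xy /=.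
apply: Ff; last exact: phi_nd.
- by move: x0; rewrite !in_itv /= !andbT; exact: phi0.
- by move: y0; rewrite !in_itv /= !andbT; exact: phi0.
Qed.

Lemma least_favorable_subset (Q : probability T R)
    (Pfam : set (probability T R)) (FF GG : set (R -> R))
    (Pstar : probability T R) (lstar : T -> R) :
  GG `<=` FF -> least_favorable Q Pfam FF Pstar lstar ->
  least_favorable Q Pfam GG Pstar lstar.
Proof.
move=> GF [Pstar_in PstarE le_star]; split => // P Pin.
exact: stoch_le_subset GF (le_star P Pin).
Qed.

End first_order_dominance.

Lemma F_SSD_sub_F_FSD (R : realType) : F_SSD `<=` (F_FSD : set (R -> R)).
Proof. by move=> f []. Qed.

Lemma nondecreasing_continuous_at (R : realType) (G : R -> R) (x : R) :
    nondecreasing_fun G ->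
    G (x + n.+1%:R^-1) @[n --> \oo] --> G x ->
    G (x - n.+1%:R^-1) @[n --> \oo] --> G x ->
  G @ x --> G x.
Proof.
move=> ndG /cvgrPdist_le Gr /cvgrPdist_le Gl; apply/cvgrPdist_le => e e0.
have [n [/= Grn Gln]] := filter_ex (filterI (Gr e e0) (Gl e e0)).
exists n.+1%:R^-1 => [|y /=]; first by rewrite invr_gt0 ltr0n.
rewrite ltr_distlC => /andP[/ltW/ndG xy /ltW/ndG yx].
have Gx_l : G (x - n.+1%:R^-1) <= G x by apply: ndG; rewrite lerBlDr lerDl.
have Gx_r : G x <= G (x + n.+1%:R^-1) by apply: ndG; rewrite lerDl.
move: Grn Gln; rewrite !ler_norml => /andP[? ?] /andP[? ?].
by apply/andP; split; lra.
Qed.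

Section cdfR_continuity.
Context d (T : measurableType d) (R : realType).
Variables (P : probability T R) (X : T -> R).
Hypothesis mX : measurable_fun [set: T] X.
Local Open Scope ereal_scope.

Let measurable_preimage (A : set R) : measurable A -> measurable (X @^-1` A).
Proof. by move=> mA; rewrite -[X @^-1` A]setTI; exact: mX. Qed.

Let measurable_X_le x : measurable [set w | (X w <= x)%R].
Proof.
rewrite (_ : [set w | _] = X @^-1` `]-oo, x]); first exact: measurable_preimage.
by apply/seteqP; split => w /=; rewrite in_itv.
Qed.

Let measurable_X_lt x : measurable [set w | (X w < x)%R].
Proof.
rewrite (_ : [set w | _] = X @^-1` `]-oo, x[); first exact: measurable_preimage.
by apply/seteqP; split => w /=; rewrite in_itv.
Qed.

Let measurable_X_eq x : measurable [set w | X w = x].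
Proof. exact: (measurable_preimage (measurable_set1 x)). Qed.

Lemma cdfR_nondecreasing : nondecreasing_fun (cdfR P X).
Proof.
move=> a b ab; rewrite /cdfR fine_le ?fin_num_measure//.
by apply: le_measure; rewrite ?inE// => w /= /le_trans; apply.
Qed.

Lemma cdfR_cvg_right (x : R) :
  cdfR P X (x + n.+1%:R^-1) @[n --> \oo] --> cdfR P X x.
Proof.
apply: fine_cvg; rewrite fineK ?fin_num_measure//.
rewrite [A in _ --> P A](_ : _ = \bigcap_n [set w | (X w <= x + n.+1%:R^-1)%R]).
  apply: nonincreasing_cvg_mu => //.
  - by rewrite -ge0_fin_numE ?fin_num_measure.
  - exact: bigcapT_measurable.
  - move=> m n mn; apply/subsetPset => w /= /le_trans; apply.
    by rewrite lerD2l lef_pV2 ?posrE ?ltr0n// ler_nat.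
apply/seteqP; split => w /= Xw; first by move=> n _ /=; rewrite (le_trans Xw)// lerDl.
rewrite leNgt; apply/negP => xX; have Xx_gt0 : (0 < X w - x)%R by rewrite subr_gt0.
have [n _ /(_ n (leqnn _)) /= nXx] := near_infty_natSinv_lt (PosNum Xx_gt0).
have /= := Xw n I; move: nXx; set t := (n.+1%:R^-1)%R; lra.
Qed.

Lemma cdfR_cvg_left (x : R) : P [set w | X w = x] = 0 ->
  cdfR P X (x - n.+1%:R^-1) @[n --> \oo] --> cdfR P X x.
Proof.
move=> Px0; apply: fine_cvg; rewrite fineK ?fin_num_measure//.
have -> : P [set w | (X w <= x)%R] = P [set w | (X w < x)%R].
  rewrite (_ : [set w | _] = [set w | (X w < x)%R] `|` [set w | X w = x]).
    rewrite measureU//; last first.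
      by apply/seteqP; split => w //= [/[swap] ->]; rewrite ltxx.
    by rewrite -[RHS]addr0; congr (_ + _).
  apply/seteqP; split => w /=; first by rewrite le_eqVlt => /predU1P[->|]; [right|left].
  by case=> [/ltW|->].
rewrite [A in _ --> P A](_ : _ = \bigcup_n [set w | (X w <= x - n.+1%:R^-1)%R]).
  apply: nondecreasing_cvg_mu => //; first exact: bigcupT_measurable.
  move=> m n mn; apply/subsetPset => w /= /le_trans; apply.
  by rewrite lerD2l lerN2 lef_pV2 ?posrE ?ltr0n// ler_nat.
apply/seteqP; split => w /= => [Xx|[n _ /= Xw]]; last first.
  by rewrite (le_lt_trans Xw)// ltrBlDr ltrDl invr_gt0 ltr0n.
have xX_gt0 : (0 < x - X w)%R by rewrite subr_gt0.
have [n _ /(_ n (leqnn _)) /= xn] := near_infty_natSinv_lt (PosNum xX_gt0).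
by exists n => //=; move: xn; set t := (n.+1%:R^-1)%R; lra.
Qed.

Lemma cdfR_continuous : (forall x, P [set w | X w = x] = 0) ->
  continuous (cdfR P X).
Proof.
move=> noatom x; apply: nondecreasing_continuous_at.
- exact: cdfR_nondecreasing.
- exact: cdfR_cvg_right.
- exact: cdfR_cvg_left.
Qed.

End cdfR_continuity.

Lemma powR_invrK (R : realType) (a r : R) : 0 <= a -> r != 0 ->
  (a `^ r^-1) `^ r = a.
Proof. by move=> a0 r0; rewrite -powRrM mulVf// powRr1. Qed.

Lemma powR_tilt_le (R : realType) (x h1 h2 c1 c2 : R) :
    0 < x -> h1 < h2 -> 0 < c1 -> 0 < c2 ->
    x <= (c2 / c1) `^ (h2 - h1)^-1 -> x `^ h2 / c2 <= x `^ h1 / c1.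
Proof.
move=> x0 h12 c10 c20 xx0; rewrite -(subrKC h1 h2); set del := h2 - h1.
have del0 : 0 < del by rewrite subr_gt0.
rewrite powRD ?(lt0r_neq0 x0) ?implybT// -mulrA ler_pM2l ?powR_gt0//.
rewrite ler_pdivrMr// mulrC.
rewrite -(powR_invrK (divr_ge0 (ltW c20) (ltW c10)) (lt0r_neq0 del0)).
by apply: ge0_ler_powR; rewrite ?nnegrE ?powR_ge0 ?(ltW del0) ?(ltW x0).
Qed.

Lemma powR_tilt_ge (R : realType) (x h1 h2 c1 c2 : R) :
    0 < x -> h1 < h2 -> 0 < c1 -> 0 < c2 ->
    (c2 / c1) `^ (h2 - h1)^-1 <= x -> x `^ h1 / c1 <= x `^ h2 / c2.
Proof.
move=> x0 h12 c10 c20 x0x; rewrite -(subrKC h1 h2); set del := h2 - h1.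
have del0 : 0 < del by rewrite subr_gt0.
rewrite powRD ?(lt0r_neq0 x0) ?implybT// -mulrA ler_pM2l ?powR_gt0//.
rewrite ler_pdivlMr// mulrC.
rewrite -(powR_invrK (divr_ge0 (ltW c20) (ltW c10)) (lt0r_neq0 del0)).
by apply: ge0_ler_powR; rewrite ?nnegrE ?powR_ge0 ?(ltW del0) ?(ltW x0).
Qed.

Section no_atom.
Context d (T : measurableType d) (R : realType).
Variables (Q : probability T R) (Z : T -> R).
Local Open Scope ereal_scope.

Lemma lebesgue_density_preimage_set1 (fZ : R -> R) :
    measurable_fun [set: R] fZ ->
    (forall A, measurable A ->
      Q (Z @^-1` A) = \int[lebesgue_measure]_(x in A) (fZ x)%:E) ->
  forall z, Q (Z @^-1` [set z]) = 0.
Proof.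
move=> mfZ QZ z; rewrite QZ//; apply: null_set_integral => //.
  exact/measurable_EFinP/measurable_funTS.
exact: lebesgue_measure_set1.
Qed.

Lemma injective_comp_preimage_set1 (phi : R -> R) :
    injective phi -> (forall z, Q (Z @^-1` [set z]) = 0) ->
  forall x, Q ((phi \o Z) @^-1` [set x]) = 0.
Proof.
move=> phi_inj Z0 x; have [[z <-]|xNphi] := pselect (exists z, phi z = x).
  rewrite (_ : _ @^-1` _ = Z @^-1` [set z]) ?Z0//.
  by apply/seteqP; split => w /= => [/phi_inj|->].
rewrite (_ : _ @^-1` _ = set0) ?measure0//.
by apply/seteqP; split => w //= phiZw; apply: xNphi; exists (Z w).
Qed.

End no_atom.

Definition esscher_density d (T : measurableType d) (R : realType)
    (Q : probability T R) (X : T -> R) (h : R) (w : T) : R :=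
  X w `^ h / fine 'E_Q[fun w => X w `^ h].

Section esscher_family.
Context d (T : measurableType d) (R : realType).
Variables (Q : probability T R) (X : T -> R) (P : R -> probability T R)
  (H : set R) (hs : R).
Hypotheses (X_gt0 : forall w, 0 < X w) (mX : measurable_fun [set: T] X)
  (hs_ge0 : 0 <= hs) (H_ge : H `<=` `[hs, +oo[) (H_hs : H hs)
  (PE : forall h, H h -> is_density Q (P h) (esscher_density Q X h)).
Local Notation ell := (esscher_density Q X).
Local Notation norm h := (fine 'E_Q[fun w => X w `^ h]).

Lemma esscher_norm_ge0 h : 0 <= norm h.
Proof. by apply/fine_ge0/expectation_ge0 => w; exact: powR_ge0. Qed.

Lemma esscher_density_ge0 h w : 0 <= ell h w.
Proof. by rewrite divr_ge0 ?powR_ge0 ?esscher_norm_ge0. Qed.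

Lemma measurable_esscher_density h : measurable_fun [set: T] (ell h).
Proof.
by apply: measurable_funM => //; exact: measurableT_comp (measurable_powR _) mX.
Qed.

Lemma esscher_norm_gt0 h : H h -> 0 < norm h.
Proof.
(* with [norm h = 0] the junk value [x / 0 = 0] makes [ell h] vanish *)
move=> Hh; rewrite lt_neqAle esscher_norm_ge0 andbT; apply/eqP => norm0.
have := density_integral1 (PE Hh).
under eq_integral do rewrite /esscher_density -norm0 invr0 mulr0.
by rewrite integral0 => -[] /eqP; rewrite eq_sym oner_eq0.
Qed.

Lemma esscher_stoch_le h : H h -> stoch_le F_FSD (P hs) X (P h) X.
Proof.
move=> Hh; have [<-|hs_neq_h] := eqVneq hs h; first by move=> f _ _ _.
have hs_lt_h : hs < h.
  by rewrite lt_neqAle hs_neq_h; move: (H_ge Hh); rewrite /= in_itv /= andbT.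
have [c_hs c_h] := (esscher_norm_gt0 H_hs, esscher_norm_gt0 Hh).
apply: (single_crossing_stoch_le (a := ell hs) (b := ell h)
  (x0 := (norm h / norm hs) `^ (h - hs)^-1)).
- exact: measurable_esscher_density.
- exact: measurable_esscher_density.
- exact: esscher_density_ge0.
- exact: esscher_density_ge0.
- exact: PE H_hs.
- exact: PE Hh.
- exact: powR_ge0.
- by move=> w; exact: ltW.
- by move=> w; exact: powR_tilt_le.
- by move=> w; exact: powR_tilt_ge.
Qed.

Lemma esscher_least_favorable :
  least_favorable Q (P @` H) F_FSD (P hs) (ell hs).
Proof.
split; [by exists hs|exact: PE H_hs|move=> _ [h Hh <-]].
apply: (@stoch_le_FSD_comp _ _ _ _ _ X (fun x => x `^ hs / norm hs)).
- move=> x y; rewrite !in_itv /= !andbT => x0 y0 xy.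
  by rewrite ler_pM2r ?invr_gt0 ?esscher_norm_gt0// ge0_ler_powR.
- by move=> x _; rewrite divr_ge0 ?powR_ge0 ?esscher_norm_ge0.
- exact: esscher_stoch_le.
Qed.

Lemma esscher_cdfR_continuous (Z : T -> R) (g : R -> R) : 0 < hs ->
    (forall z, 0 < g z) -> {homo g : x y / x < y} -> (forall w, X w = g (Z w)) ->
    (forall z, Q (Z @^-1` [set z]) = 0%E) ->
  continuous (cdfR (P hs) (ell hs)).
Proof.
move=> hs_gt0 g_gt0 g_inc XE Z0.
pose psi z := g z `^ hs / norm hs.
have psi_inj : injective psi.
  apply/inc_inj/le_mono => x y xy; rewrite ltr_pM2r ?invr_gt0 ?esscher_norm_gt0//.
  by rewrite gt0_ltr_powR ?nnegrE ?g_inc ?ltW.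
apply: cdfR_continuous; first exact: measurable_esscher_density.
move=> x; apply: (density_measure0 (measurable_esscher_density hs) (PE H_hs)).
  rewrite -[A in measurable A]setTI.
  exact: (measurable_esscher_density hs measurableT (measurable_set1 x)).
rewrite (_ : [set w | _] = (psi \o Z) @^-1` [set x]).
  exact: injective_comp_preimage_set1.
by apply/seteqP; split => w /=; rewrite /esscher_density XE.
Qed.

End esscher_family.

Theorem mainTheorem7 (d : measure_display) (Omega : measurableType d) (R : realType)
  (T r S0 : R) (Q : probability Omega R) (Z : Omega -> R) (fZ : R -> R)
  (s omega hstar : R) (H : set R) (P : R -> probability Omega R) :
  0 < T -> 0 < S0 -> 0 < s ->
  measurable_fun [set: Omega] Z ->
  measurable_fun [set: R] fZ ->
  (forall x, 0 < fZ x) ->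
  (forall A, measurable A ->
     Q (Z @^-1` A) = (\int[lebesgue_measure]_(x in A) (fZ x)%:E)%E) ->
  Q.-integrable [set: Omega] (EFin \o Z) ->
  ('E_Q[Z] = 0)%E ->
  ('V_Q[Z] = 1)%E ->
  let ST := fun w => S0 * expR ((r + omega) * T + s * Num.sqrt T * Z w) in
  ((expR (- r * T))%:E * 'E_Q[ST] = S0%:E)%E ->
  0 < hstar -> H `<=` `[hstar, +oo[ -> H hstar ->
  (forall h, H h -> ('E_Q[fun w => (ST w `^ h)%R] < +oo)%E) ->
  let ell := fun h w => ST w `^ h / fine ('E_Q[fun w => (ST w `^ h)%R])%E in
  (forall h, H h -> is_density Q (P h) (ell h)) ->
  [/\ (forall h, H h -> stoch_le F_FSD (P hstar) ST (P h) ST),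
      (forall h, H h -> stoch_le F_SSD (P hstar) ST (P h) ST),
      least_favorable Q (P @` H) F_FSD (P hstar) (ell hstar),
      continuous (cdfR (P hstar) (ell hstar)) &
      (hstar <= 1 -> least_favorable Q (P @` H) F_SSD (P hstar) (ell hstar))].
Proof.
move=> T0 S0_gt0 s_gt0 mZ mfZ _ QZ _ _ _ ST _ hs_gt0 H_ge H_hs _ ell PE.
pose g z := S0 * expR ((r + omega) * T + s * Num.sqrt T * z).
have g_gt0 z : 0 < g z by rewrite mulr_gt0// expR_gt0.
have g_inc : {homo g : x y / x < y}.
  move=> x y xy; rewrite ltr_pM2l// ltr_expR ltrD2l ltr_pM2l//.
  by rewrite mulr_gt0// sqrtr_gt0.
have ST_gt0 w : 0 < ST w := g_gt0 (Z w).
have mST : measurable_fun [set: Omega] ST.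
  apply: measurable_funM => //; apply: measurableT_comp => //.
  by apply: measurable_funD => //; exact: measurable_funM.
have fsd := esscher_stoch_le ST_gt0 mST H_ge H_hs PE.
have lf := esscher_least_favorable ST_gt0 mST (ltW hs_gt0) H_ge H_hs PE.
split => [//||//||_].
- by move=> h Hh; exact: stoch_le_subset (@F_SSD_sub_F_FSD R) (fsd h Hh).
- apply: (esscher_cdfR_continuous mST H_hs PE hs_gt0 g_gt0 g_inc (fun w => erefl)).
  exact: lebesgue_density_preimage_set1 mfZ QZ.
-
  exact: least_favorable_subset (@F_SSD_sub_F_FSD R) lf.
Qed.
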